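(* Let $Q$ be a manifold, $L:TQ\times\mathbb{R}\to\mathbb{R}$ a Lagrangian, $N\subseteq TQ\times\mathbb{R}$ a submanifold, and $X$ a vector field on $TQ\times\mathbb{R}$ verifying the second order equation condition along $N$, i.e. $S(X)_p=\Delta_p$ for all $p\in N$. Then, along $N$, $X$ solves the equations of motion $\bar\flat_L(X)=\gamma_{E_L}$ if and only if it solves Herglotz's equations, i.e. writing $X=\dot q^i\partial_{q^i}+b^i\partial_{\dot q^i}+c\,\partial_z$ along $N$, one has $c=L$ and $$b^i\frac{\partial^2L}{\partial\dot q^i\partial\dot q^j}+\dot q^i\frac{\partial^2L}{\partial q^i\partial\dot q^j}+L\frac{\partial^2L}{\partial z\partial\dot q^j}-\frac{\partial L}{\partial q^j}=\frac{\partial L}{\partial\dot q^j}\frac{\partial L}{\partial z}$$ on $N$, so that integral curves $(q^i(t),\dot q^i(t),z(t))$ of $X$ in $N$ satisfy $\dot z=L$ and $\frac{d}{dt}\big(\frac{\partial L}{\partial\dot q^i}\big)-\frac{\partial L}{\partial q^i}=\frac{\partial L}{\partial\dot q^i}\frac{\partial L}{\partial z}$.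
   Context: Bundle coordinates $(q^i,\dot q^i,z)$ on $TQ\times\mathbb{R}$. The canonical endomorphism is $S=dq^i\otimes\partial/\partial\dot q^i$, the Liouville vector field $\Delta=\dot q^i\partial/\partial\dot q^i$, $\eta_L=dz-\frac{\partial L}{\partial\dot q^i}dq^i$, $E_L=\Delta(L)-L$, $\bar\flat_L(v)=i_v d\eta_L+\eta_L(v)\eta_L$, and $\gamma_{E_L}=dE_L-(\mathcal{R}(E_L)+E_L)\eta_L$ where $\mathcal{R}$ is a vector field with $i_{\mathcal{R}}d\eta_L=0$, $\eta_L(\mathcal{R})=1$. ($L$ is not assumed regular; $\eta_L$ is assumed precontact so that such $\mathcal{R}$ exists.) *)

(* Local bundle coordinates (q^i, qdot^i, z) on
   TQ x R, with Q a coordinate chart, i.e. points are triples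
   (q, qdot, z) : 'rV[R]_n * 'rV[R]_n * R.  Tangent vectors at a point are
   represented by their components in the coordinate basis
   (d/dq^i, d/dqdot^i, d/dz), i.e. by elements of the same space; one-forms
   at a point are represented as functionals on tangent vectors. *)
From HB Require Import structures.
From mathcomp Require Import all_boot all_order all_algebra.
From mathcomp Require Import all_classical all_reals all_analysis.
Set Implicit Arguments. Unset Strict Implicit. Unset Printing Implicit Defensive.
Import Order.TTheory GRing.Theory Num.Theory.
Import numFieldNormedType.Exports.
Local Open Scope ring_scope.

Section Defs.
Variables (R : realType) (n : nat).

Definition TQR := ('rV[R]_n * 'rV[R]_n * R^o)%type.

Definition qc (p : TQR) : 'rV[R]_n := p.1.1.
Definition vc (p : TQR) : 'rV[R]_n := p.1.2.
Definition zc (p : TQR) : R := p.2.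

Definition dq_vec (i : 'I_n) : TQR := (('e_i : 'rV[R]_n)%R, 0, 0).
Definition dv_vec (i : 'I_n) : TQR := (0, ('e_i : 'rV[R]_n)%R, 0).
Definition dz_vec : TQR := (0, 0, 1).

Definition pdq (f : TQR -> R) (i : 'I_n) (p : TQR) : R := 'D_(dq_vec i) f p.
Definition pdv (f : TQR -> R) (i : 'I_n) (p : TQR) : R := 'D_(dv_vec i) f p.
Definition pdz (f : TQR -> R) (p : TQR) : R := 'D_dz_vec f p.

(* canonical endomorphism S = dq^i (x) d/dqdot^i, applied to a tangent vector *)
Definition Sendo (w : TQR) : TQR := (0, qc w, 0).
Definition Liouville (p : TQR) : TQR := (0, vc p, 0).

Definition dfun (f : TQR -> R) (p w : TQR) : R := 'D_w f p.

(* exterior derivative of a one-form field alpha (alpha p w = alpha_p(w)),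
   evaluated on two tangent vectors u w at p, using constant (coordinate)
   vector fields: d alpha(u,w) = u(alpha(w)) - w(alpha(u)). *)
Definition dform (alpha : TQR -> TQR -> R) (p u w : TQR) : R :=
  'D_u (fun x => alpha x w) p - 'D_w (fun x => alpha x u) p.

Variable L : TQR -> R.

Definition etaL (p w : TQR) : R :=
  zc w - \sum_(i < n) pdv L i p * qc w 0 i.

Definition energy (p : TQR) : R := dfun L p (Liouville p) - L p.

Definition flatL (p v : TQR) (w : TQR) : R :=
  dform etaL p v w + etaL p v * etaL p w.

Definition is_Reeb (Rf : TQR -> TQR) : Prop :=
  forall p, (forall w, dform etaL p (Rf p) w = 0) /\ etaL p (Rf p) = 1.

Definition gammaEL (Rf : TQR -> TQR) (p w : TQR) : R :=
  dfun energy p w - (dfun energy p (Rf p) + energy p) * etaL p w.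

Definition Herglotz (X : TQR -> TQR) (p : TQR) : Prop :=
  zc (X p) = L p /\
  forall j : 'I_n,
    \sum_(i < n) vc (X p) 0 i * pdv (pdv L j) i p
    + \sum_(i < n) vc p 0 i * pdq (pdv L j) i p
    + L p * pdz (pdv L j) p - pdq L j p
    = pdv L j p * pdz L p.

End Defs.

From HB Require Import structures.
From mathcomp Require Import all_boot all_order all_algebra.
From mathcomp Require Import all_classical all_reals all_analysis.
From mathcomp Require Import ring.
Set Implicit Arguments. Unset Strict Implicit. Unset Printing Implicit Defensive.
Import Order.TTheory GRing.Theory Num.Theory.
Import numFieldNormedType.Exports.
Local Open Scope ring_scope.

(* For a tangent vector u at p with S(u) = Delta (i.e. u^q = qdot), a coordinate
   computation shows that the one-form flat_L(u) - gamma_E_L has no dqdot-part,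
   dz-part kappa := (u^z - L) + (Rf(E_L) + L_z) and dq^i-part
   -(delta_i + kappa L_qdot^i), where delta_i is the defect of the i-th Herglotz
   equation.  The Reeb conditions, tested on u, give
   sum_i Rf^(q^i) delta_i = Rf(E_L) + L_z.  So once all delta_i vanish,
   kappa = u^z - L, and the one-form vanishes iff u^z = L and every delta_i = 0.
   Along integral curves the chain rule turns delta_i = 0 into the Herglotz
   equations. *)

Section Calculus.
Variables (R : realType) (U V : normedModType R).

Lemma differentiable_linear_continuous (f : U -> V) :
  linear f -> continuous f -> forall p, differentiable f p.
Proof.
move=> flin fcont p.
pose F : {linear U -> V} := HB.pack f (GRing.isLinear.Build _ _ _ _ _ flin).
exact: (linear_differentiable (f := F) p fcont).
Qed.

Lemma derive_linear_continuous (f : U -> V) :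
  linear f -> continuous f -> forall p w, 'D_w f p = f w.
Proof.
move=> flin fcont p w.
pose F : {linear U -> V} := HB.pack f (GRing.isLinear.Build _ _ _ _ _ flin).
rewrite deriveE; last exact: differentiable_linear_continuous.
by rewrite (diff_lin (f := F)).
Qed.

Lemma derive1_comp (f : U -> V) (gam : R -> U) t :
  derivable gam t 1 -> differentiable f (gam t) ->
  'D_1 (fun s => f (gam s)) t = 'D_('D_1 gam t) f (gam t).
Proof.
move=> /derivable1_diffP dgam df.
rewrite -[fun s => _]/(f \o gam) deriveE; last exact: differentiable_comp.
by rewrite diff_comp // (deriveE _ df) (deriveE _ dgam).
Qed.

End Calculus.

Lemma sum_pair_fst (A B : nmodType) (I : Type) (r : seq I) (F : I -> A * B) :
  (\sum_(i <- r) F i).1 = \sum_(i <- r) (F i).1.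
Proof. exact: (big_morph fst). Qed.

Lemma sum_pair_snd (A B : nmodType) (I : Type) (r : seq I) (F : I -> A * B) :
  (\sum_(i <- r) F i).2 = \sum_(i <- r) (F i).2.
Proof. exact: (big_morph snd). Qed.

Section Coordinates.
Variables (R : realType) (n : nat).
Local Notation T := (TQR R n).

Lemma TQR_coordE (w : T) :
  w = \sum_(k < n) qc w 0 k *: dq_vec R k + \sum_(k < n) vc w 0 k *: dv_vec R k
      + zc w *: dz_vec R n.
Proof.
case: w => [[a b] c]; rewrite /qc /vc /zc /=.
have sum0 (F : 'I_n -> R) : \sum_(k < n) F k *: (0 : 'rV[R]_n) = 0.
  by apply: big1 => k _; rewrite scaler0.
apply: injective_projections; rewrite /= !(sum_pair_fst, sum_pair_snd) /=.
- by apply: injective_projections;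
    rewrite /= !(sum_pair_fst, sum_pair_snd) /= !sum0 scaler0 ?addr0 ?add0r
      -row_sum_delta.
- rewrite !big1 ?add0r => [|k _|k _]; try exact: scaler0.
  by rewrite -[c%:A]/(c * 1) mulr1.
Qed.

Lemma derive_coordE (f : T -> R) p w : differentiable f p ->
  'D_w f p = \sum_(k < n) qc w 0 k * pdq f k p
             + \sum_(k < n) vc w 0 k * pdv f k p + (zc w : R) * pdz f p.
Proof.
move=> df; rewrite /pdq /pdv /pdz {1}(TQR_coordE w) deriveE //.
rewrite !linearD !linear_sum /= linearZ -deriveE //.
by congr (_ + _ + _); apply: eq_bigr => k _; rewrite linearZ -deriveE.
Qed.

Let vc_coord_linear i : linear (fun x : T => vc x 0 i : R^o).
Proof. by move=> a x y; rewrite /vc /= !mxE. Qed.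

Let vc_coord_continuous i : continuous (fun x : T => vc x 0 i).
Proof.
move=> x; apply: (@continuous_comp _ _ _ (@vc R n) (fun M : 'rV[R]_n => M 0 i)).
  by apply: continuous_comp; [exact: cvg_fst | exact: cvg_snd].
exact: coord_continuous.
Qed.

Let qc_continuous : continuous (@qc R n).
Proof. by move=> x; apply: continuous_comp; exact: cvg_fst. Qed.

Let zc_continuous : continuous (@zc R n).
Proof. by move=> x; exact: cvg_snd. Qed.

Lemma vc_coord_differentiable i p : differentiable (fun x : T => vc x 0 i : R^o) p.
Proof. exact: differentiable_linear_continuous (@vc_coord_linear i) (@vc_coord_continuous i) p. Qed.

Lemma derive_vc_coord i p w : 'D_w (fun x : T => vc x 0 i : R^o) p = vc w 0 i.
Proof. exact: derive_linear_continuous (@vc_coord_linear i) (@vc_coord_continuous i) p w. Qed.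

Lemma qc_differentiable p : differentiable (@qc R n) p.
Proof. exact: differentiable_linear_continuous. Qed.

Lemma derive_qc p w : 'D_w (@qc R n) p = qc w.
Proof. exact: derive_linear_continuous. Qed.

Lemma zc_differentiable p : differentiable (@zc R n) p.
Proof. exact: differentiable_linear_continuous. Qed.

Lemma derive_zc p w : 'D_w (@zc R n) p = zc w.
Proof. exact: derive_linear_continuous. Qed.

End Coordinates.

Lemma sum_unit_row_mul (R : pzSemiRingType) n (k : 'I_n) (F : 'I_n -> R) :
  \sum_(i < n) ('e_k : 'rV[R]_n) 0 i * F i = F k.
Proof.
rewrite (bigD1 k) //= big1 => [|i ik]; first by rewrite mxE !eqxx mul1r addr0.
by rewrite mxE (negbTE ik) andbF mul0r.
Qed.

Lemma sum_zero_row_mul (R : pzSemiRingType) n (F : 'I_n -> R) :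
  \sum_(i < n) (0 : 'rV[R]_n) 0 i * F i = 0.
Proof. by apply: big1 => i _; rewrite mxE mul0r. Qed.

Section Lagrangian.
Variables (R : realType) (n : nat) (L : TQR R n -> R).
Local Notation T := (TQR R n).
Hypothesis L_diff : forall p, differentiable L p.
Hypothesis dL_diff : forall (u : T) p, differentiable (fun x => 'D_u L x) p.

Let pdv_differentiable i p : differentiable (pdv L i) p.
Proof. exact: dL_diff. Qed.

Let pdv_derivable i p u : derivable (pdv L i) p u.
Proof. exact/diff_derivable/pdv_differentiable. Qed.

Definition herglotz_defect (u p : T) (j : 'I_n) : R :=
  'D_u (pdv L j) p - pdq L j p - pdv L j p * pdz L p.

Lemma derive_etaL p u w :
  'D_u (fun x => etaL L x w) p = - \sum_(i < n) 'D_u (pdv L i) p * qc w 0 i.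
Proof.
have -> : (fun x => etaL L x w) = cst (zc w) - \sum_(i < n) (pdv L i * cst (qc w 0 i)).
  by apply/funext => x; rewrite /etaL fct_sumE.
have term_derivable i : derivable (pdv L i * cst (qc w 0 i)) p u.
  by apply: derivableM; [exact: pdv_derivable | exact: derivable_cst].
rewrite deriveB ?derive_cst ?derive_sum ?sub0r //; last exact: derivable_sum.
congr (- _); apply: eq_bigr => i _.
by rewrite deriveM ?derive_cst ?scaler0 ?add0r // [RHS]mulrC.
Qed.

Lemma dform_etaLE p u w :
  dform (etaL L) p u w = \sum_(i < n) 'D_w (pdv L i) p * qc u 0 i
                         - \sum_(i < n) 'D_u (pdv L i) p * qc w 0 i.
Proof. by rewrite /dform !derive_etaL opprK addrC. Qed.

Lemma energyE x : energy L x = \sum_(i < n) vc x 0 i * pdv L i x - L x.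
Proof.
have q0 : qc (Liouville x) = 0 by [].
have z0 : zc (Liouville x) = 0 by [].
rewrite /energy /dfun (derive_coordE _ (L_diff x)) q0 z0.
by rewrite [X in X + _ + _]sum_zero_row_mul mul0r add0r addr0.
Qed.

Lemma dfun_energyE p w :
  dfun (energy L) p w = \sum_(i < n) vc w 0 i * pdv L i p
                        + \sum_(i < n) vc p 0 i * 'D_w (pdv L i) p - 'D_w L p.
Proof.
have -> : energy L = \sum_(i < n) ((fun x => vc x 0 i) * pdv L i) - L.
  by apply/funext => x; rewrite energyE fct_sumE.
have term_derivable i : derivable ((fun x => vc x 0 i) * pdv L i) p w.
  apply: derivableM; [exact/diff_derivable/vc_coord_differentiable | exact: pdv_derivable].
rewrite /dfun deriveB; [|exact: derivable_sum|exact: diff_derivable].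
rewrite derive_sum // -big_split; congr (_ - _); apply: eq_bigr => i _.
rewrite deriveM; [|exact/diff_derivable/vc_coord_differentiable|exact: pdv_derivable].
rewrite derive_vc_coord.
by rewrite addrC [_ *: _]mulrC.
Qed.

(* [etaL] subtracts in [R^o]; this form subtracts in [R], as [ring] needs. *)
Lemma etaLE p w : etaL L p w = (zc w : R) - \sum_(i < n) pdv L i p * qc w 0 i.
Proof. by []. Qed.

Lemma etaL_add_energy p u : qc u = vc p -> etaL L p u + energy L p = (zc u : R) - L p.
Proof.
move=> u_sode; rewrite etaLE energyE u_sode.
rewrite (eq_bigr (fun i => vc p 0 i * pdv L i p)) => [|i _]; last exact: mulrC.
ring.
Qed.

Variable Rf : T -> T.

Definition dz_defect (u p : T) : R :=
  (zc u : R) - L p + (dfun (energy L) p (Rf p) + pdz L p).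

Lemma flatL_sub_gammaEL p u w : qc u = vc p ->
  flatL L p u w - gammaEL L Rf p w =
  (zc w : R) * dz_defect u p
  - \sum_(i < n) qc w 0 i * (herglotz_defect u p i + dz_defect u p * pdv L i p).
Proof.
move=> u_sode; rewrite /flatL /gammaEL.
transitivity (dform (etaL L) p u w - dfun (energy L) p w
  + (etaL L p u + energy L p + dfun (energy L) p (Rf p)) * etaL L p w); first ring.
rewrite etaL_add_energy // dform_etaLE dfun_energyE (derive_coordE _ (L_diff p)) u_sode.
have defect_sum : \sum_(i < n) qc w 0 i * (herglotz_defect u p i + dz_defect u p * pdv L i p)
  = \sum_(i < n) 'D_u (pdv L i) p * qc w 0 i - \sum_(i < n) qc w 0 i * pdq L i p
    + (dz_defect u p - pdz L p) * \sum_(i < n) pdv L i p * qc w 0 i.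
  rewrite mulr_sumr -sumrB -big_split /=; apply: eq_bigr => i _.
  by rewrite /herglotz_defect; ring.
have swap : \sum_(i < n) vc p 0 i * 'D_w (pdv L i) p
          = \sum_(i < n) 'D_w (pdv L i) p * vc p 0 i.
  by apply: eq_bigr => i _; exact: mulrC.
rewrite defect_sum swap etaLE /dz_defect.
(* Abstracting the coordinate functions keeps [ring] from unfolding
   derivatives and matrices when comparing atoms. *)
move: (pdq L) (pdv L) (qc w) (vc w) (vc p) => Lq Lv qw vw vp.
ring.
Qed.

Lemma reeb_sum_herglotz_defect p u : is_Reeb L Rf -> qc u = vc p ->
  \sum_(i < n) qc (Rf p) 0 i * herglotz_defect u p i
  = dfun (energy L) p (Rf p) + pdz L p.
Proof.
move=> /(_ p) [reeb_dform reeb_eta] u_sode.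
have reeb_sym : \sum_(i < n) 'D_u (pdv L i) p * qc (Rf p) 0 i
              = \sum_(i < n) 'D_(Rf p) (pdv L i) p * vc p 0 i.
  by move: (reeb_dform u); rewrite dform_etaLE u_sode => /eqP; rewrite subr_eq0 => /eqP.
have reeb_z : (zc (Rf p) : R) = 1 + \sum_(i < n) pdv L i p * qc (Rf p) 0 i.
  by rewrite -reeb_eta etaLE subrK.
have defect_sum : \sum_(i < n) qc (Rf p) 0 i * herglotz_defect u p i
  = \sum_(i < n) 'D_u (pdv L i) p * qc (Rf p) 0 i
    - \sum_(i < n) qc (Rf p) 0 i * pdq L i p
    - pdz L p * \sum_(i < n) pdv L i p * qc (Rf p) 0 i.
  rewrite mulr_sumr -!sumrB; apply: eq_bigr => i _.
  by rewrite /herglotz_defect; ring.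
have swap : \sum_(i < n) vc p 0 i * 'D_(Rf p) (pdv L i) p
          = \sum_(i < n) 'D_(Rf p) (pdv L i) p * vc p 0 i.
  by apply: eq_bigr => i _; exact: mulrC.
rewrite defect_sum reeb_sym dfun_energyE (derive_coordE _ (L_diff p)) swap reeb_z.
move: (pdq L) (pdv L) (qc (Rf p)) (vc (Rf p)) (vc p) => Lq Lv qR vR vp.
ring.
Qed.

Lemma flatL_eq_gammaEL_iff p u : is_Reeb L Rf -> qc u = vc p ->
  (forall w, flatL L p u w = gammaEL L Rf p w) <->
  zc u = L p /\ forall j, herglotz_defect u p j = 0.
Proof.
move=> reeb u_sode.
have reeb_defect0 : (forall j, herglotz_defect u p j = 0) ->
    dfun (energy L) p (Rf p) + pdz L p = 0.
  move=> defect0; rewrite -(reeb_sum_herglotz_defect reeb u_sode).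
  by apply: big1 => i _; rewrite defect0 mulr0.
split=> [flat_gamma | [zcL defect0] w].
- have diff0 w : (zc w : R) * dz_defect u p
      - \sum_(i < n) qc w 0 i * (herglotz_defect u p i + dz_defect u p * pdv L i p) = 0.
    by rewrite -flatL_sub_gammaEL // flat_gamma subrr.
  have dz0 : dz_defect u p = 0.
    have := diff0 (dz_vec R n).
    have q0 : qc (dz_vec R n) = 0 by [].
    have z1 : zc (dz_vec R n) = 1 by [].
    by rewrite q0 z1 [X in _ - X]sum_zero_row_mul mul1r subr0.
  have defect0 j : herglotz_defect u p j = 0.
    have := diff0 (dq_vec R j).
    have qe : qc (dq_vec R j) = 'e_j by [].
    have z0 : zc (dq_vec R j) = 0 by [].
    rewrite qe z0 [X in _ - X]sum_unit_row_mul dz0 !mul0r addr0 sub0r.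
    by move/eqP; rewrite oppr_eq0 => /eqP.
  split=> //; apply/eqP; rewrite -subr_eq0.
  by move: dz0; rewrite /dz_defect reeb_defect0 // addr0 => ->.
- have dz0 : dz_defect u p = 0 by rewrite /dz_defect zcL reeb_defect0 // subrr addr0.
  apply/eqP; rewrite -subr_eq0 flatL_sub_gammaEL // dz0 mulr0 sub0r big1 ?oppr0 // => i _.
  by rewrite defect0 mul0r addr0 mulr0.
Qed.

Lemma HerglotzE (X : T -> T) p : qc (X p) = vc p ->
  Herglotz L X p <-> zc (X p) = L p /\ forall j, herglotz_defect (X p) p j = 0.
Proof.
move=> X_sode.
have defectE j : zc (X p) = L p -> herglotz_defect (X p) p j =
    \sum_(i < n) vc (X p) 0 i * pdv (pdv L j) i p
    + \sum_(i < n) vc p 0 i * pdq (pdv L j) i p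
    + L p * pdz (pdv L j) p - pdq L j p - pdv L j p * pdz L p.
  move=> zcL; rewrite /herglotz_defect (derive_coordE _ (pdv_differentiable j p)) X_sode zcL.
  by rewrite [in LHS](addrC (\sum_(k < n) vc p 0 k * pdq (pdv L j) k p)).
rewrite /Herglotz; split=> -[zcL herglotz]; split=> // j.
- by rewrite defectE // (herglotz j) subrr.
- by move: (herglotz j); rewrite defectE // => /eqP; rewrite subr_eq0 => /eqP.
Qed.

End Lagrangian.

Theorem mainTheorem8 (R : realType) (n : nat) (L : TQR R n -> R)
    (N : set (TQR R n)) (X : TQR R n -> TQR R n) (Rf : TQR R n -> TQR R n) :
  (forall p, differentiable L p) ->
  (forall (u : TQR R n) p, differentiable (fun x => 'D_u L x) p) ->
  is_Reeb L Rf ->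
  (forall p, N p -> Sendo (X p) = Liouville p) ->
  (forall p, N p ->
     ((forall w, flatL L p (X p) w = gammaEL L Rf p w) <-> Herglotz L X p)) /\
  ((forall p, N p -> Herglotz L X p) ->
   forall gam : R -> TQR R n,
     (forall t, N (gam t)) ->
     (forall t, derivable gam t 1 /\ 'D_1 gam t = X (gam t)) ->
     forall t,
       'D_1 (fun s => qc (gam s)) t = vc (gam t) /\
       'D_1 (fun s => zc (gam s)) t = L (gam t) /\
       forall i : 'I_n,
         'D_1 (fun s => pdv L i (gam s)) t - pdq L i (gam t)
         = pdv L i (gam t) * pdz L (gam t)).
Proof.
move=> L_diff dL_diff reeb sode.
have X_sode p : N p -> qc (X p) = vc p by move=> /sode /(congr1 (fun x => x.1.2)).
split=> [p Np | herglotz gam gamN gam_flow t].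
  rewrite (HerglotzE dL_diff (X_sode p Np)).
  exact: (flatL_eq_gammaEL_iff L_diff dL_diff reeb (X_sode p Np)).
have [gam_der gam_vel] := gam_flow t.
have [zcL defect0] := (HerglotzE dL_diff (X_sode _ (gamN t))).1 (herglotz _ (gamN t)).
split; [|split].
- rewrite (derive1_comp (f := @qc R n)) ?gam_vel ?derive_qc //.
  + exact: X_sode.
  + exact: qc_differentiable.
- rewrite (derive1_comp (f := @zc R n)) ?gam_vel ?derive_zc //.
  exact: zc_differentiable.
- move=> i; rewrite (derive1_comp (f := pdv L i)) ?gam_vel //; last exact: dL_diff.
  by apply/eqP; rewrite -subr_eq0; apply/eqP; exact: defect0.
Qed.
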